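(* Suppose $\psi\in\Psi^*$, $s,s'\in\Omega_2$ and $|s-s'|\le(\mathcal{L}\log\mathcal{L})^{-1}$. Then $$\frac{F(s,\psi)}{F(s',\psi)}=1+O\big(|s-s'|\mathcal{L}\log\mathcal{L}\big).$$
   Context: Standing conventions: $\chi$ is a real primitive Dirichlet character of modulus $D$, where $D$ exceeds a sufficiently large absolute constant; implied constants are absolute. $\mathcal{L}=\log D$, $Q=\exp(\mathcal{L}^2)$, $\alpha=\mathcal{L}^{-2}$, $s_0=\tfrac12+iD$. Let $\mathcal{Q}$ be the set of integers $q$ with $Q<q<2Q$, $\gcd(q,6)=1$, $q$ squarefree; $\Psi_q$ the set of primitive characters $\psi\bmod q$ with $\psi\chi$ primitive modulo $\mathrm{lcm}(q,D)$; $\Psi=\bigcup_q\Psi_q$. Define $\nu,\upsilon$ by $\sum\nu(n)n^{-s}=\zeta(s)L(s,\chi)$, $\sum\upsilon(n)n^{-s}=\zeta(s)^{-1}L(s,\chi)^{-1}$; $F(s,\psi)=\sum_{n\le D^5}\nu(n)\psi(n)n^{-s}$, $G(s,\psi)=\sum_{n\le D^5}\upsilon(n)\psi(n)n^{-s}$; $\Delta(s,\psi)=L(s,\psi)/L(1-s,\bar\psi)$, $\Delta_1(s,\psi)=\Delta(s,\psi)\Delta(s,\psi\chi)$, $\mathcal{F}(s,\psi)=F(s,\psi)+\Delta_1(s,\psi)F(1-s,\bar\psi)$. $\Omega_1=\{s:-2\alpha^{1/2}<\mathrm{Re}(s-s_0)<1,\ |\mathrm{Im}(s-s_0)|<1+20\mathcal{L}\}$,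 $\Omega_2=\{s:-\tfrac1{10}\alpha\log\mathcal{L}<\mathrm{Re}(s-s_0)<\tfrac12,\ |\mathrm{Im}(s-s_0)|<1+10\mathcal{L}\}$. $\Psi^*$ is the set of $\psi\in\Psi$ with (I1) $\sup_{\Omega_1}\{|F|+|G|\}<\mathcal{L}^3\log\mathcal{L}$, (I2) $\sup_{\Omega_1}|FG-1|<\tfrac12$, (I3) $\sup_{\Omega_2}|L(s,\psi)L(s,\psi\chi)-\mathcal{F}(s,\psi)|<\mathcal{L}^{-24/5}$. *)

From Stdlib Require Import Reals Arith List.
From Coquelicot Require Import Coquelicot.
Import ListNotations.
Open Scope R_scope.

Definition Csum (l : list C) : C := fold_right Cplus (RtoC 0) l.

Definition divisors (n : nat) : list nat :=
  filter (fun d => Nat.eqb (n mod d) 0) (seq 1 n).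

(* n^{-s} for a positive integer n and complex s = sigma + i t:
   n^{-s} = n^{-sigma} (cos (t log n) - i sin (t log n)). *)
Definition npow_neg (n : nat) (s : C) : C :=
  let l := ln (INR n) in
  Cmult (RtoC (exp (- (Re s) * l))) (cos (Im s * l), - sin (Im s * l)).

Definition dirichlet_char (q : nat) (f : nat -> C) : Prop :=
  (1 <= q)%nat /\
  f 1%nat = RtoC 1 /\
  (forall m n : nat, f (m * n)%nat = Cmult (f m) (f n)) /\
  (forall n : nat, f (n + q)%nat = f n) /\
  (forall n : nat, Nat.gcd n q = 1%nat -> f n <> RtoC 0) /\
  (forall n : nat, Nat.gcd n q <> 1%nat -> f n = RtoC 0).

(* primitive: not induced by a character of any proper divisor modulus d *)
Definition primitive_char (q : nat) (f : nat -> C) : Prop :=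
  dirichlet_char q f /\
  forall d : nat, Nat.divide d q -> (d < q)%nat ->
    exists n : nat, n mod d = 1 mod d /\ Nat.gcd n q = 1%nat /\ f n <> RtoC 1.

Definition real_char (f : nat -> C) : Prop := forall n : nat, Im (f n) = 0.

Definition char_mul (f g : nat -> C) : nat -> C := fun n => Cmult (f n) (g n).
Definition char_conj (f : nat -> C) : nat -> C := fun n => Cconj (f n).

Definition partial_L (f : nat -> C) (s : C) (N : nat) : C :=
  Csum (map (fun n => Cmult (f n) (npow_neg n s)) (seq 1 N)).

(* For a non-principal character
   this series converges for Re s > 0 and equals the analytic continuation of
   L(s,f) there; it is only used in this range. *)
Definition Lfun (f : nat -> C) (s : C) : C :=
  (real (Lim_seq (fun N => Re (partial_L f s N))),
   real (Lim_seq (fun N => Im (partial_L f s N)))).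

Definition Delta (psi : nat -> C) (s : C) : C :=
  Cdiv (Lfun psi s) (Lfun (char_conj psi) (Cminus (RtoC 1) s)).

Definition Delta1 (chi psi : nat -> C) (s : C) : C :=
  Cmult (Delta psi s) (Delta (char_mul psi chi) s).

Definition LL (D : nat) : R := ln (INR D).
Definition QQ (D : nat) : R := exp (LL D ^ 2).
Definition alpha (D : nat) : R := / (LL D ^ 2).
Definition s0 (D : nat) : C := (/ 2, INR D).

(* zeta(s) L(s,chi) = sum nu(n) n^{-s},  nu(n) = sum_{d | n} chi(d) *)
Definition nu (chi : nat -> C) (n : nat) : C := Csum (map chi (divisors n)).

(* upsilon = Dirichlet-convolution inverse of nu (so that
   sum upsilon(n) n^{-s} = 1/(zeta(s) L(s,chi))), defined by the recursion
   upsilon(1) = 1, upsilon(n) = - sum_{d | n, d < n} upsilon(d) nu(n/d). *)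
Fixpoint ups_aux (chi : nat -> C) (k n : nat) : C :=
  match k with
  | O => RtoC 0
  | S k' =>
      if Nat.eqb n 1 then RtoC 1
      else Copp (Csum (map (fun d => Cmult (ups_aux chi k' d) (nu chi (n / d)))
                           (filter (fun d => Nat.ltb d n) (divisors n))))
  end.
Definition upsilon (chi : nat -> C) (n : nat) : C := ups_aux chi n n.

Definition FF (D : nat) (chi psi : nat -> C) (s : C) : C :=
  Csum (map (fun n => Cmult (Cmult (nu chi n) (psi n)) (npow_neg n s)) (seq 1 (D ^ 5))).
Definition GG (D : nat) (chi psi : nat -> C) (s : C) : C :=
  Csum (map (fun n => Cmult (Cmult (upsilon chi n) (psi n)) (npow_neg n s)) (seq 1 (D ^ 5))).

Definition FFcal (D : nat) (chi psi : nat -> C) (s : C) : C :=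
  Cplus (FF D chi psi s)
        (Cmult (Delta1 chi psi s) (FF D chi (char_conj psi) (Cminus (RtoC 1) s))).

Definition Omega1 (D : nat) (s : C) : Prop :=
  - 2 * sqrt (alpha D) < Re (Cminus s (s0 D)) < 1 /\
  Rabs (Im (Cminus s (s0 D))) < 1 + 20 * LL D.
Definition Omega2 (D : nat) (s : C) : Prop :=
  - (1 / 10) * alpha D * ln (LL D) < Re (Cminus s (s0 D)) < 1 / 2 /\
  Rabs (Im (Cminus s (s0 D))) < 1 + 10 * LL D.

Definition squarefree (q : nat) : Prop :=
  forall p : nat, (2 <= p)%nat -> ~ Nat.divide (p * p) q.

Definition in_Qset (D q : nat) : Prop :=
  QQ D < INR q < 2 * QQ D /\ Nat.gcd q 6 = 1%nat /\ squarefree q.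

Definition in_Psi_q (D : nat) (chi : nat -> C) (q : nat) (psi : nat -> C) : Prop :=
  primitive_char q psi /\ primitive_char (Nat.lcm q D) (char_mul psi chi).

Definition in_Psi (D : nat) (chi : nat -> C) (psi : nat -> C) : Prop :=
  exists q : nat, in_Qset D q /\ in_Psi_q D chi q psi.

Definition sup_lt (Omega : C -> Prop) (g : C -> R) (B : R) : Prop :=
  exists M : R, M < B /\ forall s : C, Omega s -> g s <= M.

Definition in_Psi_star (D : nat) (chi : nat -> C) (psi : nat -> C) : Prop :=
  in_Psi D chi psi /\
  sup_lt (Omega1 D) (fun s => Cmod (FF D chi psi s) + Cmod (GG D chi psi s))
         (LL D ^ 3 * ln (LL D)) /\
  sup_lt (Omega1 D) (fun s => Cmod (Cminus (Cmult (FF D chi psi s) (GG D chi psi s)) (RtoC 1)))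
         (1 / 2) /\
  sup_lt (Omega2 D)
         (fun s => Cmod (Cminus (Cmult (Lfun psi s) (Lfun (char_mul psi chi) s))
                                (FFcal D chi psi s)))
         (Rpower (LL D) (- (24 / 5))).

(* On Omega1 the conditions (I1) and (I2) pin |F| between 1/(2M) and M, M = L^3 log L.
   Where F does not vanish, log |F| is harmonic with gradient given by F'/F, and its first
   Fourier coefficient on the circle of radius r about z is pi r (F'/F)(z); hence
   |F'/F(z)| <= 2 log (M / m) / r, a Borel-Caratheodory type bound.  Every point of the
   segment [s', s] in Omega2 is the centre of a disc of radius 3/(2L) inside Omega1, so
   |F'/F| <= 18 L log L on the segment, and integrating along a segment of length at most
   1/(L log L) gives F(s)/F(s') = 1 + O(|s - s'| L log L).  The Fourier moments M_k(r) of
   F'/F on circles are handled without complex integration theory: the Cauchy-Riemann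
   equations in polar coordinates give r M_k' + k M_k = 0. *)

From Stdlib Require Import Reals Lra Psatz List.
From Coquelicot Require Import Coquelicot.
Open Scope R_scope.

(* Terms built by Coquelicot's generic lemmas live in canonical-structure carriers
   (R_AbsRing, R_NormedModule, ...) that are only convertible to R, which blocks [ring],
   [lra] and first-order unification; [ring_R] and the [_R] restatements below fix the type. *)
Ltac ring_R := match goal with |- ?x = ?y => change (x = y :> R); ring end.

Lemma is_derive_eq (f : R -> R) (x l l' : R) : l = l' -> is_derive f x l -> is_derive f x l'.
Proof. now intros <-. Qed.

Lemma is_derive_R_ext (f g : R -> R) (x l : R) :
  (forall t, f t = g t) -> is_derive f x l -> is_derive g x l.
Proof. apply is_derive_ext. Qed.

Lemma is_derive_Rplus (f g : R -> R) (x a b : R) :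
  is_derive f x a -> is_derive g x b -> is_derive (fun t => f t + g t) x (a + b).
Proof. apply (is_derive_plus f g). Qed.

Lemma is_derive_Rminus (f g : R -> R) (x a b : R) :
  is_derive f x a -> is_derive g x b -> is_derive (fun t => f t - g t) x (a - b).
Proof. apply (is_derive_minus f g). Qed.

Lemma is_derive_Rmult (f g : R -> R) (x a b : R) :
  is_derive f x a -> is_derive g x b -> is_derive (fun t => f t * g t) x (a * g x + f x * b).
Proof. intros Hf Hg. apply (is_derive_mult f g); auto. intros; apply Rmult_comm. Qed.

Lemma is_derive_comp_R (F f : R -> R) (x a dF : R) :
  is_derive F (f x) dF -> is_derive f x a -> is_derive (fun t => F (f t)) x (a * dF).
Proof. intros HF Hf. exact (is_derive_comp F f x dF a HF Hf). Qed.

Lemma affine_of_const_derive (M M' : R -> R) (c Rr r : R) :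
  (forall x, Rabs x < Rr -> is_derive M x (M' x)) ->
  (forall x, 0 < x < Rr -> M' x = c) -> 0 <= r < Rr -> M r = M 0 + r * c.
Proof.
  intros HM Hc Hr. destruct (Req_dec r 0) as [->|Hr0]; [ring|].
  destruct (MVT_cor2 M M' 0 r) as [x [E Hx]]; [lra| |].
  - intros x Hx. apply is_derive_Reals, HM. rewrite Rabs_right; lra.
  - rewrite Hc in E by lra. lra.
Qed.

Lemma exp_le_compat (x y : R) : x <= y -> exp x <= exp y.
Proof. intros [H|H]; [left; now apply exp_increasing | right; now rewrite H]. Qed.

(** * Complex-valued functions of a real variable *)

Lemma Cnorm2_pos (w : C) : w <> 0%C -> 0 < fst w ^ 2 + snd w ^ 2.
Proof.
  intros Hw. destruct w as [x y]; simpl.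
  destruct (Req_dec x 0); destruct (Req_dec y 0); subst; try nra.
  exfalso; now apply Hw.
Qed.

Definition is_derive_C (g : R -> C) (t : R) (l : C) : Prop :=
  is_derive (fun u => fst (g u)) t (fst l) /\ is_derive (fun u => snd (g u)) t (snd l).

Lemma is_derive_C_eq (g : R -> C) (t : R) (l l' : C) :
  l = l' -> is_derive_C g t l -> is_derive_C g t l'.
Proof. now intros <-. Qed.

Lemma is_derive_C_const (c : C) (t : R) : is_derive_C (fun _ => c) t 0.
Proof. split; [apply (is_derive_const (fst c) t) | apply (is_derive_const (snd c) t)]. Qed.

Lemma is_derive_C_RtoC (f : R -> R) (t a : R) :
  is_derive f t a -> is_derive_C (fun u => RtoC (f u)) t a.
Proof. intros H; split; [exact H | apply (is_derive_const 0 t)]. Qed.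

Lemma is_derive_C_plus (g h : R -> C) (t : R) (l m : C) :
  is_derive_C g t l -> is_derive_C h t m -> is_derive_C (fun u => g u + h u)%C t (l + m)%C.
Proof.
  intros [A B] [E F]; split; simpl; apply is_derive_Rplus; auto.
Qed.

Lemma is_derive_C_mult (g h : R -> C) (t : R) (l m : C) :
  is_derive_C g t l -> is_derive_C h t m ->
  is_derive_C (fun u => g u * h u)%C t (l * h t + g t * m)%C.
Proof.
  intros [A B] [E F]; split; simpl.
  - eapply is_derive_eq; [|apply is_derive_Rminus; apply is_derive_Rmult; eauto]. simpl; ring.
  - eapply is_derive_eq; [|apply is_derive_Rplus; apply is_derive_Rmult; eauto]. simpl; ring.
Qed.

Lemma is_derive_C_inv (g : R -> C) (t : R) (l : C) :
  g t <> 0%C -> is_derive_C g t l -> is_derive_C (fun u => / g u)%C t (- l / (g t * g t))%C.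
Proof.
  intros Hnz [A B].
  set (q := fun u => fst (g u) * fst (g u) + snd (g u) * snd (g u)).
  assert (Hq : q t <> 0) by (pose proof (Cnorm2_pos _ Hnz); unfold q; nra).
  assert (Dq : is_derive (fun u => / q u) t
                 (- (fst l * fst (g t) + fst (g t) * fst l + (snd l * snd (g t) + snd (g t) * snd l))
                  / q t ^ 2)).
  { apply is_derive_inv; auto. apply is_derive_Rplus; apply is_derive_Rmult; auto. }
  unfold q in Hq, Dq. destruct l as [c d]; simpl in A, B, Dq.
  split.
  - eapply is_derive_ext with (f := fun u => fst (g u) * / q u).
    { intros u; unfold q; simpl; unfold Rdiv; f_equal; f_equal; ring. }
    eapply is_derive_eq; [|apply is_derive_Rmult; eauto].
    unfold q. destruct (g t) as [a b]; simpl.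
    assert (Hs : (a * a - b * b) * (a * a - b * b) + (a * b + b * a) * (a * b + b * a)
                 = (a * a + b * b) * (a * a + b * b)) by ring.
    field; rewrite ?Hs; split; auto; apply Rmult_integral_contrapositive; auto.
  - eapply is_derive_ext with (f := fun u => - snd (g u) * / q u).
    { intros u; unfold q; simpl; unfold Rdiv; f_equal; f_equal; ring. }
    eapply is_derive_eq.
    2: apply is_derive_Rmult; [apply (is_derive_opp (fun u => snd (g u))); eauto | eauto].
    unfold q. destruct (g t) as [a b]; simpl. change (opp d) with (- d).
    assert (Hs : (a * a - b * b) * (a * a - b * b) + (a * b + b * a) * (a * b + b * a)
                 = (a * a + b * b) * (a * a + b * b)) by ring.
    field; rewrite ?Hs; split; auto; apply Rmult_integral_contrapositive; auto.
Qed.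

Lemma is_derive_C_line (z d : C) (t : R) : is_derive_C (fun u => z + u * d)%C t d.
Proof. split; simpl; auto_derive; auto; ring. Qed.

Definition expi (k : nat) (t : R) : C := (cos (INR k * t), sin (INR k * t)).

Lemma is_derive_C_expi (k : nat) (t : R) : is_derive_C (expi k) t (INR k * Ci * expi k t)%C.
Proof. unfold expi; split; simpl; auto_derive; auto; ring. Qed.

Lemma expi_2PI (k : nat) : expi k (2 * PI) = expi k 0.
Proof.
  unfold expi. rewrite Rmult_0_r.
  replace (INR k * (2 * PI)) with (0 + 2 * INR k * PI) by ring.
  now rewrite cos_period, sin_period.
Qed.

Lemma expi_0 (t : R) : expi 0 t = 1%C.
Proof. unfold expi; simpl. now rewrite Rmult_0_l, cos_0, sin_0. Qed.

Lemma Cmod_expi (k : nat) (t : R) : Cmod (expi k t) = 1.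
Proof.
  unfold Cmod, expi; simpl.
  replace (cos (INR k * t) * (cos (INR k * t) * 1) + sin (INR k * t) * (sin (INR k * t) * 1))
    with 1 by (pose proof (sin2_cos2 (INR k * t)) as H; unfold Rsqr in H; lra).
  apply sqrt_1.
Qed.

Lemma is_derive_C_npow_neg (n : nat) (g : R -> C) (t : R) (v : C) :
  is_derive_C g t v ->
  is_derive_C (fun u => npow_neg n (g u)) t (- ln (INR n) * v * npow_neg n (g t))%C.
Proof.
  intros [A B]. unfold npow_neg. set (l := ln (INR n)).
  assert (Dx : is_derive (fun u => - fst (g u) * l) t (- fst v * l)).
  { apply is_derive_R_ext with (f := fun u => - l * fst (g u)); [intros; ring|].
    eapply is_derive_eq; [|apply (is_derive_scal (fun u => fst (g u))); exact A]. ring. }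
  assert (Dy : is_derive (fun u => snd (g u) * l) t (snd v * l)).
  { apply is_derive_R_ext with (f := fun u => l * snd (g u)); [intros; ring|].
    eapply is_derive_eq; [|apply (is_derive_scal (fun u => snd (g u))); exact B]. ring. }
  assert (De := is_derive_comp_R exp _ t _ _ (proj2 (is_derive_Reals _ _ _) (derivable_pt_lim_exp _)) Dx).
  assert (Dc := is_derive_comp_R cos _ t _ _ (proj2 (is_derive_Reals _ _ _) (derivable_pt_lim_cos _)) Dy).
  assert (Ds := is_derive_comp_R sin _ t _ _ (proj2 (is_derive_Reals _ _ _) (derivable_pt_lim_sin _)) Dy).
  split.
  - apply is_derive_R_ext with (f := fun u => exp (- fst (g u) * l) * cos (snd (g u) * l)).
    { intros u; cbv [Cmult RtoC Re Im fst snd]; ring. }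
    eapply is_derive_eq; [|apply is_derive_Rmult; eauto]. unfold Re, Im; simpl; ring.
  - apply is_derive_R_ext with (f := fun u => - (exp (- fst (g u) * l) * sin (snd (g u) * l))).
    { intros u; cbv [Cmult RtoC Re Im fst snd]; ring. }
    eapply is_derive_eq.
    2: apply (is_derive_opp (fun u => exp (- fst (g u) * l) * sin (snd (g u) * l)));
       apply is_derive_Rmult; eauto.
    change (opp ?x) with (- x). unfold Re, Im; simpl; ring.
Qed.

Definition dirpoly (a : nat -> C) (l : list nat) (s : C) : C :=
  Csum (map (fun n => a n * npow_neg n s)%C l).

Definition deriv_coef (a : nat -> C) (n : nat) : C := (a n * - ln (INR n))%C.

Lemma is_derive_C_dirpoly (a : nat -> C) (l : list nat) (g : R -> C) (t : R) (v : C) :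
  is_derive_C g t v ->
  is_derive_C (fun u => dirpoly a l (g u)) t (dirpoly (deriv_coef a) l (g t) * v)%C.
Proof.
  intros Hg. induction l as [|n l IH]; unfold dirpoly in *; simpl.
  - eapply is_derive_C_eq; [|apply is_derive_C_const]. ring.
  - eapply is_derive_C_eq.
    2: apply is_derive_C_plus; [apply is_derive_C_mult;
         [apply is_derive_C_const | apply is_derive_C_npow_neg, Hg] | exact IH].
    unfold deriv_coef. ring.
Qed.

Definition continuity_2d_pt_C (G : R -> R -> C) (x y : R) : Prop :=
  continuity_2d_pt (fun u v => fst (G u v)) x y /\ continuity_2d_pt (fun u v => snd (G u v)) x y.

Lemma continuity_2d_pt_C_const (c : C) (x y : R) : continuity_2d_pt_C (fun _ _ => c) x y.
Proof. split; apply continuity_2d_pt_const. Qed.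

Lemma continuity_2d_pt_C_RtoC (f : R -> R -> R) (x y : R) :
  continuity_2d_pt f x y -> continuity_2d_pt_C (fun u v => RtoC (f u v)) x y.
Proof. split; simpl; auto. apply continuity_2d_pt_const. Qed.

Lemma continuity_2d_pt_C_plus (G H : R -> R -> C) (x y : R) :
  continuity_2d_pt_C G x y -> continuity_2d_pt_C H x y ->
  continuity_2d_pt_C (fun u v => G u v + H u v)%C x y.
Proof. intros [A B] [E F]; split; apply continuity_2d_pt_plus; auto. Qed.

Lemma continuity_2d_pt_C_opp (G : R -> R -> C) (x y : R) :
  continuity_2d_pt_C G x y -> continuity_2d_pt_C (fun u v => - G u v)%C x y.
Proof. intros [A B]; split; apply continuity_2d_pt_opp; auto. Qed.

Lemma continuity_2d_pt_C_mult (G H : R -> R -> C) (x y : R) :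
  continuity_2d_pt_C G x y -> continuity_2d_pt_C H x y ->
  continuity_2d_pt_C (fun u v => G u v * H u v)%C x y.
Proof.
  intros [A B] [E F]; split; simpl;
    [apply continuity_2d_pt_minus | apply continuity_2d_pt_plus];
    apply continuity_2d_pt_mult; auto.
Qed.

Lemma continuity_2d_pt_C_inv (G : R -> R -> C) (x y : R) :
  G x y <> 0%C -> continuity_2d_pt_C G x y -> continuity_2d_pt_C (fun u v => / G u v)%C x y.
Proof.
  intros Hnz [A B].
  assert (Hq : fst (G x y) ^ 2 + snd (G x y) ^ 2 <> 0) by (pose proof (Cnorm2_pos _ Hnz); lra).
  assert (Cq : continuity_2d_pt (fun u v => / (fst (G u v) ^ 2 + snd (G u v) ^ 2)) x y).
  { apply continuity_2d_pt_inv; auto.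
    apply continuity_2d_pt_plus; simpl; repeat apply continuity_2d_pt_mult;
      auto using continuity_2d_pt_const. }
  split; simpl; unfold Rdiv; apply continuity_2d_pt_mult; auto.
  now apply continuity_2d_pt_opp.
Qed.

Lemma continuity_2d_pt_C_npow_neg (n : nat) (W : R -> R -> C) (x y : R) :
  continuity_2d_pt_C W x y -> continuity_2d_pt_C (fun u v => npow_neg n (W u v)) x y.
Proof.
  intros [A B]. unfold npow_neg, Re, Im.
  assert (Cx : continuity_2d_pt (fun u v => - fst (W u v) * ln (INR n)) x y)
    by (apply continuity_2d_pt_mult; auto using continuity_2d_pt_opp, continuity_2d_pt_const).
  assert (Cy : continuity_2d_pt (fun u v => snd (W u v) * ln (INR n)) x y)
    by (apply continuity_2d_pt_mult; auto using continuity_2d_pt_const).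
  apply continuity_2d_pt_C_mult; [apply continuity_2d_pt_C_RtoC | split; simpl].
  - apply continuity_1d_2d_pt_comp; auto. apply derivable_continuous_pt, derivable_pt_exp.
  - apply continuity_1d_2d_pt_comp; auto. apply continuity_cos.
  - apply continuity_2d_pt_opp, continuity_1d_2d_pt_comp; auto. apply continuity_sin.
Qed.

Lemma continuity_2d_pt_C_dirpoly (a : nat -> C) (l : list nat) (W : R -> R -> C) (x y : R) :
  continuity_2d_pt_C W x y -> continuity_2d_pt_C (fun u v => dirpoly a l (W u v)) x y.
Proof.
  intros HW. induction l as [|n l IH]; unfold dirpoly in *; simpl.
  - apply continuity_2d_pt_C_const.
  - apply continuity_2d_pt_C_plus; auto.
    apply continuity_2d_pt_C_mult; [apply continuity_2d_pt_C_const|].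
    now apply continuity_2d_pt_C_npow_neg.
Qed.

Lemma continuity_2d_pt_C_expi (k : nat) (x y : R) : continuity_2d_pt_C (fun _ t => expi k t) x y.
Proof.
  split; simpl; apply continuity_1d_2d_pt_comp;
    auto using continuity_cos, continuity_sin;
    apply continuity_2d_pt_mult; auto using continuity_2d_pt_const, continuity_2d_pt_id2.
Qed.

Lemma continuity_2d_pt_C_conj (G : R -> R -> C) (x y : R) :
  continuity_2d_pt_C G x y -> continuity_2d_pt_C (fun u v => Cconj (G u v)) x y.
Proof. intros [A B]; split; auto. now apply continuity_2d_pt_opp. Qed.

Definition circle (z : C) (r t : R) : C := (z + r * expi 1 t)%C.

Lemma continuity_2d_pt_C_circle (z : C) (x y : R) : continuity_2d_pt_C (circle z) x y.
Proof.
  apply continuity_2d_pt_C_plus; [apply continuity_2d_pt_C_const|].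
  apply continuity_2d_pt_C_mult; [|apply continuity_2d_pt_C_expi].
  apply continuity_2d_pt_C_RtoC, continuity_2d_pt_id1.
Qed.

Lemma is_derive_C_circle_r (z : C) (r t : R) : is_derive_C (fun u => circle z u t) r (expi 1 t).
Proof. apply is_derive_C_line. Qed.

Lemma is_derive_C_circle_t (z : C) (r t : R) :
  is_derive_C (circle z r) t (r * Ci * expi 1 t)%C.
Proof.
  eapply is_derive_C_eq.
  2: apply is_derive_C_plus; [apply is_derive_C_const
                             |apply is_derive_C_mult; [apply is_derive_C_const | apply is_derive_C_expi]].
  simpl; ring.
Qed.

Lemma Cmod_circle_sub (z : C) (r t : R) : Cmod (circle z r t - z)%C = Rabs r.
Proof.
  unfold circle. replace (z + r * expi 1 t - z)%C with (r * expi 1 t)%C by ring.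
  now rewrite Cmod_mult, Cmod_R, Cmod_expi, Rmult_1_r.
Qed.

Lemma circle_2PI (z : C) (r : R) : circle z r (2 * PI) = circle z r 0.
Proof. unfold circle; now rewrite expi_2PI. Qed.

Lemma circle_0 (z : C) (t : R) : circle z 0 t = z.
Proof. unfold circle; ring. Qed.

Definition RInt_C (f : R -> C) (a b : R) : C :=
  (RInt (fun t => fst (f t)) a b, RInt (fun t => snd (f t)) a b).

Definition ex_RInt_C (f : R -> C) (a b : R) : Prop :=
  ex_RInt (fun t => fst (f t)) a b /\ ex_RInt (fun t => snd (f t)) a b.

Lemma continuity_2d_pt_continuous (f : R -> R -> R) (x y : R) :
  continuity_2d_pt f x y -> continuous (f x) y.
Proof.
  intros H P [eps HP]. destruct (H eps) as [d Hd].
  exists d. intros v Hv. apply HP, (Hd x v); auto.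
  rewrite Rminus_eq_0, Rabs_R0. apply cond_pos.
Qed.

Lemma ex_RInt_continuity_2d (f : R -> R -> R) (x a b : R) :
  (forall t, Rmin a b <= t <= Rmax a b -> continuity_2d_pt f x t) -> ex_RInt (f x) a b.
Proof.
  intros H. apply (ex_RInt_continuous (V := R_CompleteNormedModule)).
  intros; now apply continuity_2d_pt_continuous, H.
Qed.

Lemma ex_RInt_C_continuity_2d (F : R -> R -> C) (x a b : R) :
  (forall t, Rmin a b <= t <= Rmax a b -> continuity_2d_pt_C F x t) -> ex_RInt_C (F x) a b.
Proof.
  intros H; split;
    [apply (ex_RInt_continuity_2d (fun u t => fst (F u t)))
    |apply (ex_RInt_continuity_2d (fun u t => snd (F u t)))]; intros; apply H; auto.
Qed.

Lemma RInt_ext_R (f g : R -> R) (a b : R) : (forall t, f t = g t) -> RInt f a b = RInt g a b.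
Proof. intros E; apply RInt_ext; intros; apply E. Qed.

Lemma RInt_lincomb (f g : R -> R) (a b p q : R) :
  ex_RInt f a b -> ex_RInt g a b ->
  RInt (fun t => p * f t + q * g t) a b = p * RInt f a b + q * RInt g a b.
Proof.
  intros Hf Hg. apply (is_RInt_unique (V := R_CompleteNormedModule)).
  apply (is_RInt_plus (V := R_CompleteNormedModule) (fun t => p * f t) (fun t => q * g t));
    apply (is_RInt_scal (V := R_CompleteNormedModule));
    now apply (RInt_correct (V := R_CompleteNormedModule)).
Qed.

Lemma RInt_C_ext (f g : R -> C) (a b : R) :
  (forall t, f t = g t) -> RInt_C f a b = RInt_C g a b.
Proof.
  intros E. unfold RInt_C. f_equal; apply RInt_ext_R; intros; now rewrite E.
Qed.

Lemma ex_RInt_C_plus (f g : R -> C) (a b : R) :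
  ex_RInt_C f a b -> ex_RInt_C g a b -> ex_RInt_C (fun t => f t + g t)%C a b.
Proof.
  intros [F1 F2] [G1 G2]; split;
    [apply (ex_RInt_plus (fun t => fst (f t)) (fun t => fst (g t)))
    |apply (ex_RInt_plus (fun t => snd (f t)) (fun t => snd (g t)))]; auto.
Qed.

Lemma ex_RInt_C_scal (c : C) (f : R -> C) (a b : R) :
  ex_RInt_C f a b -> ex_RInt_C (fun t => c * f t)%C a b.
Proof.
  intros [F1 F2]; split.
  - apply (ex_RInt_minus (fun t => fst c * fst (f t)) (fun t => snd c * snd (f t)));
      apply (ex_RInt_scal (V := R_NormedModule)); auto.
  - apply (ex_RInt_plus (fun t => fst c * snd (f t)) (fun t => snd c * fst (f t)));
      apply (ex_RInt_scal (V := R_NormedModule)); auto.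
Qed.

Lemma RInt_C_plus (f g : R -> C) (a b : R) :
  ex_RInt_C f a b -> ex_RInt_C g a b ->
  RInt_C (fun t => f t + g t)%C a b = (RInt_C f a b + RInt_C g a b)%C.
Proof.
  intros [F1 F2] [G1 G2]. unfold RInt_C, Cplus; simpl. f_equal.
  - transitivity (RInt (fun t => 1 * fst (f t) + 1 * fst (g t)) a b).
    + apply RInt_ext_R; intros; simpl; ring.
    + rewrite RInt_lincomb by auto; ring_R.
  - transitivity (RInt (fun t => 1 * snd (f t) + 1 * snd (g t)) a b).
    + apply RInt_ext_R; intros; simpl; ring.
    + rewrite RInt_lincomb by auto; ring_R.
Qed.

Lemma RInt_C_scal (c : C) (f : R -> C) (a b : R) :
  ex_RInt_C f a b -> RInt_C (fun t => c * f t)%C a b = (c * RInt_C f a b)%C.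
Proof.
  intros [F1 F2]. destruct c as [c1 c2]. unfold RInt_C, Cmult; simpl. f_equal.
  - transitivity (RInt (fun t => c1 * fst (f t) + - c2 * snd (f t)) a b).
    + apply RInt_ext_R; intros; simpl; ring.
    + rewrite RInt_lincomb by auto; ring_R.
  - transitivity (RInt (fun t => c1 * snd (f t) + c2 * fst (f t)) a b).
    + apply RInt_ext_R; intros; simpl; ring.
    + rewrite RInt_lincomb by auto; ring_R.
Qed.

Lemma RInt_C_conj (f : R -> C) (a b : R) :
  ex_RInt_C f a b -> RInt_C (fun t => Cconj (f t)) a b = Cconj (RInt_C f a b).
Proof.
  intros [F1 F2]. unfold RInt_C, Cconj; simpl. f_equal.
  transitivity (RInt (fun t => -1 * snd (f t) + 0 * snd (f t)) a b).
  - apply RInt_ext_R; intros; ring.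
  - rewrite RInt_lincomb by auto; ring_R.
Qed.

Lemma RInt_C_const (c : C) (a b : R) : RInt_C (fun _ => c) a b = ((b - a) * c)%C.
Proof.
  unfold RInt_C. rewrite !RInt_const. destruct c; unfold Cmult, RtoC; simpl.
  change (scal (b - a) r) with ((b - a) * r). change (scal (b - a) r0) with ((b - a) * r0).
  f_equal; ring.
Qed.

Definition continuous_C (f : R -> C) (t : R) : Prop :=
  continuous (fun u => fst (f u)) t /\ continuous (fun u => snd (f u)) t.

Lemma continuity_2d_pt_C_continuous (F : R -> R -> C) (x y : R) :
  continuity_2d_pt_C F x y -> continuous_C (F x) y.
Proof.
  intros [A B]; split;
    [apply (continuity_2d_pt_continuous (fun u v => fst (F u v)))
    |apply (continuity_2d_pt_continuous (fun u v => snd (F u v)))]; auto.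
Qed.

Lemma RInt_C_deriv_periodic (g g' : R -> C) (a b : R) :
  (forall t, Rmin a b <= t <= Rmax a b -> is_derive_C g t (g' t)) ->
  (forall t, Rmin a b <= t <= Rmax a b -> continuous_C g' t) ->
  g b = g a -> RInt_C g' a b = 0%C.
Proof.
  intros Hd Hc Hper. unfold RInt_C.
  rewrite (is_RInt_unique (V := R_CompleteNormedModule) (fun t => fst (g' t)) a b
             (minus (fst (g b)) (fst (g a)))).
  rewrite (is_RInt_unique (V := R_CompleteNormedModule) (fun t => snd (g' t)) a b
             (minus (snd (g b)) (snd (g a)))).
  - rewrite Hper. change ((fst (g a) - fst (g a), snd (g a) - snd (g a)) = (0, 0)).
    f_equal; ring.
  - apply (is_RInt_derive (V := R_CompleteNormedModule) (fun t => snd (g t)));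
      intros; [apply Hd | apply Hc]; auto.
  - apply (is_RInt_derive (V := R_CompleteNormedModule) (fun t => fst (g t)));
      intros; [apply Hd | apply Hc]; auto.
Qed.

Lemma Cmod_le_abs_fst_snd (x : C) : Cmod x <= Rabs (fst x) + Rabs (snd x).
Proof.
  replace x with (RtoC (fst x) + Ci * RtoC (snd x))%C at 1
    by (destruct x as [a b]; unfold Ci, RtoC, Cplus, Cmult; simpl; f_equal; ring).
  eapply Rle_trans; [apply Cmod_triangle|].
  rewrite Cmod_mult, Cmod_Ci, !Cmod_R. lra.
Qed.

Lemma Cmod_RInt_C_le (f : R -> C) (a b B : R) :
  a <= b -> ex_RInt_C f a b -> (forall t, a <= t <= b -> Cmod (f t) <= B) ->
  Cmod (RInt_C f a b) <= 2 * ((b - a) * B).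
Proof.
  intros Hab [F1 F2] HB.
  eapply Rle_trans; [apply Cmod_le_abs_fst_snd|]. simpl.
  assert (Rabs (RInt (fun t => fst (f t)) a b) <= (b - a) * B).
  { apply abs_RInt_le_const; auto. intros t Ht.
    eapply Rle_trans; [apply (re_le_Cmod (f t))| auto]. }
  assert (Rabs (RInt (fun t => snd (f t)) a b) <= (b - a) * B).
  { apply abs_RInt_le_const; auto. intros t Ht.
    eapply Rle_trans; [|apply (HB t Ht)].
    pose proof (Rmax_Cmod (f t)); pose proof (Rmax_r (Rabs (fst (f t))) (Rabs (snd (f t)))); lra. }
  lra.
Qed.

Lemma locally_abs_lt (x Rr : R) : Rabs x < Rr -> locally x (fun y => Rabs y < Rr).
Proof.
  intros H. assert (Hp : 0 < Rr - Rabs x) by lra.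
  exists (mkposreal _ Hp). intros y Hy. change (Rabs (y - x) < Rr - Rabs x) in Hy.
  assert (E : y - x + x = y :> R) by ring.
  pose proof (Rabs_triang (y - x) x) as T. rewrite E in T. lra.
Qed.

Lemma is_derive_RInt_param_R (A A1 : R -> R -> R) (Rr a b x : R) :
  (forall r t, Rabs r < Rr -> is_derive (fun u => A u t) r (A1 r t)) ->
  (forall r t, Rabs r < Rr -> continuity_2d_pt A1 r t) ->
  (forall r t, Rabs r < Rr -> continuity_2d_pt A r t) ->
  Rabs x < Rr -> is_derive (fun r => RInt (A r) a b) x (RInt (A1 x) a b).
Proof.
  intros HD HC1 HC Hx.
  replace (RInt (A1 x) a b) with (RInt (fun t => Derive (fun u => A u t) x) a b)
    by (apply RInt_ext_R; intros; apply is_derive_unique, HD; auto).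
  apply (is_derive_RInt_param A).
  - apply (filter_imp _ _ (fun y Hy t _ => ex_intro _ _ (HD y t Hy)) (locally_abs_lt x Rr Hx)).
  - intros t _. apply continuity_2d_pt_ext_loc with (f := A1); auto.
    assert (Hp : 0 < Rr - Rabs x) by lra. exists (mkposreal _ Hp). intros u v Hu _.
    symmetry; apply is_derive_unique, HD.
    pose proof (Rabs_triang (u - x) x). replace (u - x + x) with u in H by ring. simpl in Hu. lra.
  - apply (filter_imp _ _ (fun y Hy => ex_RInt_continuity_2d A y a b (fun t _ => HC y t Hy))
             (locally_abs_lt x Rr Hx)).
Qed.

Lemma is_derive_C_RInt_C_param (A A1 : R -> R -> C) (Rr a b x : R) :
  (forall r t, Rabs r < Rr -> is_derive_C (fun u => A u t) r (A1 r t)) ->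
  (forall r t, Rabs r < Rr -> continuity_2d_pt_C A1 r t) ->
  (forall r t, Rabs r < Rr -> continuity_2d_pt_C A r t) ->
  Rabs x < Rr -> is_derive_C (fun r => RInt_C (A r) a b) x (RInt_C (A1 x) a b).
Proof.
  intros HD HC1 HC Hx; split;
    [apply (is_derive_RInt_param_R (fun r t => fst (A r t)) (fun r t => fst (A1 r t)) Rr)
    |apply (is_derive_RInt_param_R (fun r t => snd (A r t)) (fun r t => snd (A1 r t)) Rr)];
    auto; intros r t Hr; first [apply HD | apply HC1 | apply HC]; auto.
Qed.

Lemma affine_of_const_derive_C (M M' : R -> C) (c : C) (Rr r : R) :
  (forall x, Rabs x < Rr -> is_derive_C M x (M' x)) ->
  (forall x, 0 < x < Rr -> M' x = c) -> 0 <= r < Rr -> M r = (M 0 + r * c)%C.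
Proof.
  intros HM Hc Hr.
  assert (E1 : fst (M r) = fst (M 0) + r * fst c).
  { apply (affine_of_const_derive (fun x => fst (M x)) (fun x => fst (M' x))) with Rr; auto.
    - intros x Hx; apply HM; auto.
    - intros x Hx; now rewrite Hc. }
  assert (E2 : snd (M r) = snd (M 0) + r * snd c).
  { apply (affine_of_const_derive (fun x => snd (M x)) (fun x => snd (M' x))) with Rr; auto.
    - intros x Hx; apply HM; auto.
    - intros x Hx; now rewrite Hc. }
  apply injective_projections; simpl; [rewrite E1 | rewrite E2]; ring.
Qed.

Lemma ex_RInt_C_expi (k : nat) (a b : R) : ex_RInt_C (expi k) a b.
Proof.
  apply (ex_RInt_C_continuity_2d (fun _ t => expi k t) 0).
  intros; apply continuity_2d_pt_C_expi.
Qed.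

Lemma ex_RInt_C_conj_expi (k : nat) (a b : R) : ex_RInt_C (fun t => Cconj (expi k t)) a b.
Proof.
  apply (ex_RInt_C_continuity_2d (fun _ t => Cconj (expi k t)) 0).
  intros; apply continuity_2d_pt_C_conj, continuity_2d_pt_C_expi.
Qed.

Lemma RInt_C_expi (k : nat) : (0 < k)%nat -> RInt_C (expi k) 0 (2 * PI) = 0%C.
Proof.
  intros Hk. apply lt_0_INR in Hk.
  assert (E : (INR k * Ci * RInt_C (expi k) 0 (2 * PI))%C = 0%C).
  { rewrite <- RInt_C_scal by apply ex_RInt_C_expi.
    apply (RInt_C_deriv_periodic (expi k)); [intros; apply is_derive_C_expi| |apply expi_2PI].
    intros t _.
    apply (continuity_2d_pt_C_continuous (fun _ t => INR k * Ci * expi k t)%C 0).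
    apply continuity_2d_pt_C_mult;
      [apply continuity_2d_pt_C_const | apply continuity_2d_pt_C_expi]. }
  replace (RInt_C (expi k) 0 (2 * PI))
    with (/ (INR k * Ci) * (INR k * Ci * RInt_C (expi k) 0 (2 * PI)))%C.
  - rewrite E; ring.
  - field. split; intro H; [apply (f_equal snd) in H | apply (f_equal fst) in H];
      simpl in H; lra.
Qed.

Lemma RInt_C_conj_expi_1 : RInt_C (fun t => Cconj (expi 1 t)) 0 (2 * PI) = 0%C.
Proof.
  rewrite RInt_C_conj, RInt_C_expi by auto using ex_RInt_C_expi.
  unfold Cconj, RtoC; apply injective_projections; simpl; ring.
Qed.

Lemma re_mul_expi_conj (g : C) (t : R) :
  (RtoC (fst (g * expi 1 t)%C) * Cconj (expi 1 t))%C
  = (/ 2 * (g * expi 0 t + Cconj (g * expi 2 t)))%C.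
Proof.
  destruct g as [a b]. unfold expi.
  replace (INR 2 * t) with (2 * t) by (simpl; ring).
  rewrite !Rmult_0_l, !Rmult_1_l, cos_0, sin_0, sin_2a.
  apply injective_projections; simpl.
  - rewrite cos_2a_cos. field.
  - rewrite cos_2a_sin. field.
Qed.

(** * Fourier moments on circles *)

Section CircleMoments.

(* [G r t] stands for [g (z + r e^{it})] with [g] holomorphic near the closed disc and
   [G1 r t] for [g'] at the same point; the two derivative hypotheses are the
   Cauchy-Riemann equations in polar coordinates. *)
Variables (G G1 : R -> R -> C) (Rr : R).
Hypothesis G_deriv_r :
  forall r t, Rabs r < Rr -> is_derive_C (fun u => G u t) r (G1 r t * expi 1 t)%C.
Hypothesis G_deriv_t :
  forall r t, Rabs r < Rr -> is_derive_C (G r) t (G1 r t * (r * Ci * expi 1 t))%C.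
Hypothesis G_cont : forall r t, Rabs r < Rr -> continuity_2d_pt_C G r t.
Hypothesis G1_cont : forall r t, Rabs r < Rr -> continuity_2d_pt_C G1 r t.
Hypothesis G_2PI : forall r, G r (2 * PI) = G r 0.
Hypothesis G_center : forall t, G 0 t = G 0 0.

Lemma ex_RInt_C_field (F : R -> R -> C) (x : R) :
  (forall r t, Rabs r < Rr -> continuity_2d_pt_C F r t) -> Rabs x < Rr ->
  ex_RInt_C (F x) 0 (2 * PI).
Proof. intros HF Hx. apply ex_RInt_C_continuity_2d; auto. Qed.

Definition moment (k : nat) (r : R) : C := RInt_C (fun t => G r t * expi k t)%C 0 (2 * PI).

Definition moment_deriv (k : nat) (r : R) : C :=
  RInt_C (fun t => G1 r t * expi 1 t * expi k t)%C 0 (2 * PI).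

Lemma continuity_2d_pt_C_moment (k : nat) (r t : R) :
  Rabs r < Rr -> continuity_2d_pt_C (fun r t => G r t * expi k t)%C r t.
Proof. intros; apply continuity_2d_pt_C_mult; auto using continuity_2d_pt_C_expi. Qed.

Lemma continuity_2d_pt_C_moment_deriv (k : nat) (r t : R) :
  Rabs r < Rr -> continuity_2d_pt_C (fun r t => G1 r t * expi 1 t * expi k t)%C r t.
Proof. intros; repeat apply continuity_2d_pt_C_mult; auto using continuity_2d_pt_C_expi. Qed.

Lemma is_derive_C_moment (k : nat) (x : R) :
  Rabs x < Rr -> is_derive_C (moment k) x (moment_deriv k x).
Proof.
  unfold moment, moment_deriv.
  apply (is_derive_C_RInt_C_param (fun r t => G r t * expi k t)%C
           (fun r t => G1 r t * expi 1 t * expi k t)%C Rr); intros r t Hr.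
  - eapply is_derive_C_eq;
      [|apply is_derive_C_mult; [apply G_deriv_r, Hr | apply is_derive_C_const]].
    cbv beta; ring.
  - now apply continuity_2d_pt_C_moment_deriv.
  - now apply continuity_2d_pt_C_moment.
Qed.

(* The [t]-derivative of [G x t e^{ikt}] is [i (x X + k Y)] with [X], [Y] the integrands of
   [moment_deriv] and [moment]; its integral over a period vanishes. *)
Lemma moment_ode (k : nat) (x : R) :
  Rabs x < Rr -> (x * moment_deriv k x + INR k * moment k x)%C = 0%C.
Proof.
  intros Hx. unfold moment, moment_deriv.
  set (Y := fun t => (G x t * expi k t)%C).
  set (X := fun t => (G1 x t * expi 1 t * expi k t)%C).
  assert (EY : ex_RInt_C Y 0 (2 * PI))
    by (apply (ex_RInt_C_field (fun r t => G r t * expi k t)%C); auto using continuity_2d_pt_C_moment).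
  assert (EX : ex_RInt_C X 0 (2 * PI))
    by (apply (ex_RInt_C_field (fun r t => G1 r t * expi 1 t * expi k t)%C);
        auto using continuity_2d_pt_C_moment_deriv).
  assert (E : RInt_C (fun t => Ci * (x * X t + INR k * Y t))%C 0 (2 * PI) = 0%C).
  { apply (RInt_C_deriv_periodic Y).
    - intros t _. eapply is_derive_C_eq.
      2: apply is_derive_C_mult; [apply G_deriv_t, Hx | apply is_derive_C_expi].
      unfold X, Y; ring.
    - intros t _.
      apply (continuity_2d_pt_C_continuous
               (fun r t => Ci * (r * (G1 r t * expi 1 t * expi k t) + INR k * (G r t * expi k t)))%C x).
      apply continuity_2d_pt_C_mult; [apply continuity_2d_pt_C_const|].
      apply continuity_2d_pt_C_plus; apply continuity_2d_pt_C_mult;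
        auto using continuity_2d_pt_C_const, continuity_2d_pt_C_moment,
                   continuity_2d_pt_C_moment_deriv.
      apply continuity_2d_pt_C_RtoC, continuity_2d_pt_id1.
    - unfold Y. now rewrite G_2PI, expi_2PI. }
  rewrite RInt_C_scal, RInt_C_plus, !RInt_C_scal in E
    by auto using ex_RInt_C_plus, ex_RInt_C_scal.
  replace (x * RInt_C X 0 (2 * PI) + INR k * RInt_C Y 0 (2 * PI))%C
    with (- Ci * (Ci * (x * RInt_C X 0 (2 * PI) + INR k * RInt_C Y 0 (2 * PI))))%C.
  - rewrite E; ring.
  - unfold Ci; apply injective_projections; simpl; ring.
Qed.

Lemma moment_0 (r : R) : 0 <= r < Rr -> moment 0 r = (2 * PI * G 0 0)%C.
Proof.
  intros Hr.
  rewrite (affine_of_const_derive_C (moment 0) (moment_deriv 0) 0 Rr r); auto using is_derive_C_moment.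
  - unfold moment. rewrite (RInt_C_ext _ (fun _ => G 0 0)), RInt_C_const.
    + ring_simplify. unfold RtoC, Cmult; simpl. f_equal; ring.
    + intros t. now rewrite G_center, expi_0, Cmult_1_r.
  - intros x Hx. assert (E := moment_ode 0 x ltac:(rewrite Rabs_right; lra)).
    simpl in E. rewrite Cmult_0_l, Cplus_0_r in E.
    replace (moment_deriv 0 x) with (/ x * (x * moment_deriv 0 x))%C.
    + rewrite E; ring.
    + field. intro H; apply (f_equal fst) in H; simpl in H; lra.
Qed.

(* [r^2 M_2(r)] has derivative [r (r M_2' + 2 M_2) = 0] and vanishes at the centre. *)
Lemma moment_2 (r : R) : 0 < r < Rr -> moment 2 r = 0%C.
Proof.
  intros Hr.
  assert (E := affine_of_const_derive_C (fun x => RtoC (x * x) * moment 2 x)%C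
                 (fun x => RtoC (2 * x) * moment 2 x + RtoC (x * x) * moment_deriv 2 x)%C
                 0 Rr r).
  cbv beta in E.
  replace (moment 2 r) with (/ RtoC (r * r) * (RtoC (r * r) * moment 2 r))%C.
  - rewrite E; [unfold RtoC; apply injective_projections; simpl; ring| | |lra].
    + intros x Hx. eapply is_derive_C_eq.
      2: apply is_derive_C_mult; [|now apply is_derive_C_moment].
      2: apply is_derive_C_RtoC with (f := fun u => u * u); auto_derive; auto.
      cbv beta. now replace (1 * x + x * 1) with (2 * x) by ring.
    + intros x Hx. assert (O := moment_ode 2 x ltac:(rewrite Rabs_right; lra)).
      replace (RtoC (2 * x) * moment 2 x + RtoC (x * x) * moment_deriv 2 x)%C
        with (x * (x * moment_deriv 2 x + INR 2 * moment 2 x))%C.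
      * rewrite O; ring.
      * unfold RtoC; simpl; apply injective_projections; simpl; ring.
  - field. intro H; apply (f_equal fst) in H; simpl in H; nra.
Qed.

Variable U : R -> R -> R.
Hypothesis U_deriv_r :
  forall r t, Rabs r < Rr -> is_derive (fun u => U u t) r (fst (G r t * expi 1 t)%C).
Hypothesis U_cont : forall r t, Rabs r < Rr -> continuity_2d_pt U r t.
Hypothesis U_center : forall t, U 0 t = U 0 0.

Lemma continuity_2d_pt_C_U_conj_expi (r t : R) :
  Rabs r < Rr -> continuity_2d_pt_C (fun r t => RtoC (U r t) * Cconj (expi 1 t))%C r t.
Proof.
  intros Hr. apply continuity_2d_pt_C_mult.
  - now apply continuity_2d_pt_C_RtoC, U_cont.
  - apply continuity_2d_pt_C_conj, continuity_2d_pt_C_expi.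
Qed.

(* The [r]-derivative of the first Fourier coefficient of [U]: since
   [Re (G e^{it}) e^{-it} = (G + conj (G e^{2it})) / 2], it is [(M_0 + conj M_2) / 2]. *)
Lemma fourier_coef_1_deriv (x : R) :
  0 < x < Rr ->
  RInt_C (fun t => RtoC (fst (G x t * expi 1 t)%C) * Cconj (expi 1 t))%C 0 (2 * PI)
  = (PI * G 0 0)%C.
Proof.
  intros Hx. assert (Hx' : Rabs x < Rr) by (rewrite Rabs_right; lra).
  assert (E0 := ex_RInt_C_field _ x (continuity_2d_pt_C_moment 0) Hx').
  assert (E2 := ex_RInt_C_field _ x (continuity_2d_pt_C_moment 2) Hx').
  rewrite (RInt_C_ext _ (fun t => / 2 * (G x t * expi 0 t + Cconj (G x t * expi 2 t)))%C)
    by (intros; apply re_mul_expi_conj).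
  rewrite RInt_C_scal, RInt_C_plus, RInt_C_conj; auto.
  - fold (moment 0 x) (moment 2 x). rewrite moment_0, moment_2 by lra.
    unfold Cconj, RtoC; apply injective_projections; simpl; field.
  - apply (ex_RInt_C_field (fun r t => Cconj (G r t * expi 2 t))%C); auto.
    intros; now apply continuity_2d_pt_C_conj, continuity_2d_pt_C_moment.
  - apply ex_RInt_C_plus; auto.
    apply (ex_RInt_C_field (fun r t => Cconj (G r t * expi 2 t))%C); auto.
    intros; now apply continuity_2d_pt_C_conj, continuity_2d_pt_C_moment.
Qed.

Lemma fourier_coef_1 (r : R) :
  0 < r < Rr ->
  RInt_C (fun t => RtoC (U r t) * Cconj (expi 1 t))%C 0 (2 * PI) = (PI * r * G 0 0)%C.
Proof.
  intros Hr.
  rewrite (affine_of_const_derive_C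
             (fun r => RInt_C (fun t => RtoC (U r t) * Cconj (expi 1 t))%C 0 (2 * PI))
             (fun r => RInt_C (fun t => RtoC (fst (G r t * expi 1 t)%C) * Cconj (expi 1 t))%C
                         0 (2 * PI))
             (PI * G 0 0)%C Rr r); [| | exact fourier_coef_1_deriv | lra].
  - rewrite (RInt_C_ext _ (fun t => RtoC (U 0 0) * Cconj (expi 1 t))%C)
      by (intros; now rewrite U_center).
    rewrite RInt_C_scal, RInt_C_conj_expi_1 by apply ex_RInt_C_conj_expi.
    unfold RtoC; apply injective_projections; simpl; ring.
  - intros x Hx.
    apply (is_derive_C_RInt_C_param (fun r t => RtoC (U r t) * Cconj (expi 1 t))%C
             (fun r t => RtoC (fst (G r t * expi 1 t)%C) * Cconj (expi 1 t))%C Rr);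
      auto using continuity_2d_pt_C_U_conj_expi; intros r' t Hr'.
    + eapply is_derive_C_eq.
      2: apply is_derive_C_mult; [apply is_derive_C_RtoC, U_deriv_r, Hr' | apply is_derive_C_const].
      cbv beta; ring.
    + apply continuity_2d_pt_C_mult; [|apply continuity_2d_pt_C_conj, continuity_2d_pt_C_expi].
      apply continuity_2d_pt_C_RtoC.
      apply (continuity_2d_pt_C_mult G (fun _ t => expi 1 t)); auto.
      apply continuity_2d_pt_C_expi.
Qed.

Lemma Cmod_center_le (r c0 B : R) :
  0 < r < Rr -> (forall t, Rabs (U r t - c0) <= B) -> Cmod (G 0 0) <= 4 * B / r.
Proof.
  intros Hr HB. assert (Hr' : Rabs r < Rr) by (rewrite Rabs_right; lra).
  assert (HP := PI_RGT_0).
  assert (EU := ex_RInt_C_field _ r continuity_2d_pt_C_U_conj_expi Hr').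
  assert (E : RInt_C (fun t => RtoC (U r t - c0) * Cconj (expi 1 t))%C 0 (2 * PI)
              = (PI * r * G 0 0)%C).
  { rewrite (RInt_C_ext _ (fun t => RtoC (U r t) * Cconj (expi 1 t)
                                     + RtoC (- c0) * Cconj (expi 1 t))%C)
      by (intros; unfold RtoC, Cconj; apply injective_projections; simpl; ring).
    rewrite RInt_C_plus, RInt_C_scal, RInt_C_conj_expi_1, fourier_coef_1
      by auto using ex_RInt_C_scal, ex_RInt_C_conj_expi.
    unfold RtoC; apply injective_projections; simpl; ring. }
  assert (Hb : Cmod (PI * r * G 0 0)%C <= 2 * ((2 * PI - 0) * B)).
  { rewrite <- E. apply Cmod_RInt_C_le; [lra| |].
    - apply (ex_RInt_C_field (fun r t => RtoC (U r t - c0) * Cconj (expi 1 t))%C); auto.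
      intros; apply continuity_2d_pt_C_mult;
        [|apply continuity_2d_pt_C_conj, continuity_2d_pt_C_expi].
      apply continuity_2d_pt_C_RtoC, continuity_2d_pt_minus; auto using continuity_2d_pt_const.
    - intros t _. rewrite Cmod_mult, Cmod_conj, Cmod_expi, Cmod_R, Rmult_1_r. apply HB. }
  rewrite !Cmod_mult, !Cmod_R, Rabs_right, Rabs_right in Hb by lra.
  apply (Rmult_le_reg_l (PI * r)); [nra|].
  replace (PI * r * (4 * B / r)) with (4 * PI * B) by (field; lra). lra.
Qed.

End CircleMoments.

(** * Logarithmic derivatives of Dirichlet polynomials *)

(* Also true at [w = 0], where Stdlib's [ln] returns 0 on both sides. *)
Lemma ln_Cmod (w : C) : ln (Cmod w) = / 2 * ln (fst w ^ 2 + snd w ^ 2).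
Proof.
  unfold Cmod. set (q := fst w ^ 2 + snd w ^ 2).
  assert (Hq : 0 <= q) by (unfold q; nra).
  destruct (Rle_lt_or_eq_dec 0 q Hq) as [Hp|H0].
  - rewrite <- (sqrt_sqrt q) at 2 by lra. rewrite ln_mult by (apply sqrt_lt_R0; lra). field.
  - rewrite <- H0, sqrt_0. unfold ln. destruct (Rlt_dec 0 0) as [H|H]; [destruct (Rlt_irrefl 0 H) | ring].
Qed.

Lemma is_derive_ln_Cmod (g : R -> C) (t : R) (v : C) :
  g t <> 0%C -> is_derive_C g t v ->
  is_derive (fun u => ln (Cmod (g u))) t (fst (v / g t)%C).
Proof.
  intros Hnz [A B]. assert (Hq := Cnorm2_pos _ Hnz).
  apply is_derive_R_ext with (f := fun u => / 2 * ln (fst (g u) ^ 2 + snd (g u) ^ 2));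
    [intros; now rewrite ln_Cmod|].
  eapply is_derive_eq.
  2: apply is_derive_scal, (is_derive_comp_R ln (fun u => fst (g u) ^ 2 + snd (g u) ^ 2));
       [apply is_derive_ln, Hq
       |apply is_derive_R_ext with (f := fun u => fst (g u) * fst (g u) + snd (g u) * snd (g u));
          [intros; ring | apply is_derive_Rplus; apply is_derive_Rmult; eauto]].
  cbv beta. destruct (g t) as [x y], v as [c d]; simpl in *. field. lra.
Qed.

Lemma is_derive_C_dirpoly_logderiv (a : nat -> C) (l : list nat) (g : R -> C) (t : R) (v : C) :
  dirpoly a l (g t) <> 0%C -> is_derive_C g t v ->
  is_derive_C (fun u => dirpoly (deriv_coef a) l (g u) / dirpoly a l (g u))%C t
    ((dirpoly (deriv_coef (deriv_coef a)) l (g t) * dirpoly a l (g t)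
      - dirpoly (deriv_coef a) l (g t) * dirpoly (deriv_coef a) l (g t))
     / (dirpoly a l (g t) * dirpoly a l (g t)) * v)%C.
Proof.
  intros Hnz Hg. unfold Cdiv. eapply is_derive_C_eq.
  2: apply is_derive_C_mult;
       [apply is_derive_C_dirpoly, Hg | apply is_derive_C_inv; [|apply is_derive_C_dirpoly, Hg]; auto].
  cbv beta; field; auto.
Qed.

Section DirpolyDisc.

Variables (a : nat -> C) (l : list nat) (z : C) (Rr : R).
Hypothesis dirpoly_circle_neq0 : forall r t, Rabs r < Rr -> dirpoly a l (circle z r t) <> 0%C.

Lemma continuity_2d_pt_C_dirpoly_circle (b : nat -> C) (r t : R) :
  continuity_2d_pt_C (fun r t => dirpoly b l (circle z r t)) r t.
Proof. apply continuity_2d_pt_C_dirpoly, continuity_2d_pt_C_circle. Qed.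

Let F := dirpoly a l.
Let F1 := dirpoly (deriv_coef a) l.
Let F2 := dirpoly (deriv_coef (deriv_coef a)) l.
Let G (r t : R) : C := (F1 (circle z r t) / F (circle z r t))%C.
Let G1 (r t : R) : C :=
  ((F2 (circle z r t) * F (circle z r t) - F1 (circle z r t) * F1 (circle z r t))
   / (F (circle z r t) * F (circle z r t)))%C.
Let U (r t : R) : R := ln (Cmod (F (circle z r t))).

Lemma is_derive_C_G_r (r t : R) :
  Rabs r < Rr -> is_derive_C (fun u => G u t) r (G1 r t * expi 1 t)%C.
Proof.
  intros Hr. exact (is_derive_C_dirpoly_logderiv a l (fun u => circle z u t) r (expi 1 t)
                      (dirpoly_circle_neq0 r t Hr) (is_derive_C_circle_r z r t)).
Qed.

Lemma is_derive_C_G_t (r t : R) :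
  Rabs r < Rr -> is_derive_C (G r) t (G1 r t * (r * Ci * expi 1 t))%C.
Proof.
  intros Hr. exact (is_derive_C_dirpoly_logderiv a l (circle z r) t (r * Ci * expi 1 t)%C
                      (dirpoly_circle_neq0 r t Hr) (is_derive_C_circle_t z r t)).
Qed.

Lemma continuity_2d_pt_C_G (r t : R) : Rabs r < Rr -> continuity_2d_pt_C G r t.
Proof.
  intros Hr. apply continuity_2d_pt_C_mult;
    [|apply continuity_2d_pt_C_inv; [apply dirpoly_circle_neq0, Hr|]];
    apply continuity_2d_pt_C_dirpoly_circle.
Qed.

Lemma continuity_2d_pt_C_G1 (r t : R) : Rabs r < Rr -> continuity_2d_pt_C G1 r t.
Proof.
  intros Hr. assert (Hnz := dirpoly_circle_neq0 r t Hr).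
  assert (CF := fun b => continuity_2d_pt_C_dirpoly_circle b r t).
  apply continuity_2d_pt_C_mult; [|apply continuity_2d_pt_C_inv; [now apply Cmult_neq_0|]].
  - apply continuity_2d_pt_C_plus; [|apply continuity_2d_pt_C_opp];
      apply continuity_2d_pt_C_mult; apply CF.
  - apply continuity_2d_pt_C_mult; apply CF.
Qed.

Lemma is_derive_U_r (r t : R) :
  Rabs r < Rr -> is_derive (fun u => U u t) r (fst (G r t * expi 1 t)%C).
Proof.
  intros Hr. eapply is_derive_eq.
  2: exact (is_derive_ln_Cmod (fun u => F (circle z u t)) r _ (dirpoly_circle_neq0 r t Hr)
              (is_derive_C_dirpoly a l _ r _ (is_derive_C_circle_r z r t))).
  unfold G, F1; cbv beta. f_equal. field. apply dirpoly_circle_neq0, Hr.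
Qed.

Lemma continuity_2d_pt_U (r t : R) : Rabs r < Rr -> continuity_2d_pt U r t.
Proof.
  intros Hr. assert (Hq := Cnorm2_pos _ (dirpoly_circle_neq0 r t Hr)).
  destruct (continuity_2d_pt_C_dirpoly_circle a r t) as [Cx Cy].
  apply continuity_2d_pt_ext
    with (f := fun r t => / 2 * ln (fst (F (circle z r t)) ^ 2 + snd (F (circle z r t)) ^ 2));
    [intros; symmetry; apply ln_Cmod|].
  apply continuity_2d_pt_mult; [apply continuity_2d_pt_const|].
  apply continuity_1d_2d_pt_comp; [apply continuity_pt_filterlim, continuous_ln, Hq|].
  apply continuity_2d_pt_plus; simpl; repeat apply continuity_2d_pt_mult;
    auto using continuity_2d_pt_const.
Qed.

Lemma Cmod_logderiv_center_le (r c0 B : R) :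
  0 < r < Rr -> (forall t, Rabs (ln (Cmod (dirpoly a l (circle z r t))) - c0) <= B) ->
  Cmod (dirpoly (deriv_coef a) l z / dirpoly a l z)%C <= 4 * B / r.
Proof.
  intros Hr HB. rewrite <- (circle_0 z 0).
  apply (Cmod_center_le G G1 Rr is_derive_C_G_r is_derive_C_G_t continuity_2d_pt_C_G
           continuity_2d_pt_C_G1) with (U := U) (c0 := c0);
    auto using is_derive_U_r, continuity_2d_pt_U;
    intros; unfold G, U; now rewrite ?circle_2PI, ?circle_0.
Qed.

End DirpolyDisc.

Lemma Cmod_dirpoly_logderiv_le (a : nat -> C) (l : list nat) (z : C) (Rr r m M : R) :
  0 < r < Rr -> 0 < m ->
  (forall w, Cmod (w - z)%C < Rr -> m <= Cmod (dirpoly a l w) <= M) ->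
  Cmod (dirpoly (deriv_coef a) l z / dirpoly a l z)%C <= 2 * (ln M - ln m) / r.
Proof.
  intros Hr Hm HB.
  assert (HBc : forall r t, Rabs r < Rr -> m <= Cmod (dirpoly a l (circle z r t)) <= M)
    by (intros; apply HB; now rewrite Cmod_circle_sub).
  replace (2 * (ln M - ln m) / r) with (4 * ((ln M - ln m) / 2) / r) by (field; lra).
  apply (Cmod_logderiv_center_le a l z Rr) with (c0 := (ln M + ln m) / 2); auto.
  - intros r' t Hr' E. specialize (HBc r' t Hr'). rewrite E, Cmod_0 in HBc. lra.
  - intros t. destruct (HBc r t ltac:(rewrite Rabs_right; lra)) as [H1 H2].
    assert (ln m <= ln (Cmod (dirpoly a l (circle z r t)))) by (apply ln_le; lra).
    assert (ln (Cmod (dirpoly a l (circle z r t))) <= ln M) by (apply ln_le; lra).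
    apply Rabs_le; lra.
Qed.

(** * Growth along a segment *)

Definition segment_point (s' s : C) (t : R) : C := (s' + t * (s - s'))%C.

Section Segment.

Variables (a : nat -> C) (l : list nat) (s s' : C) (K : R).
Hypothesis K_nonneg : 0 <= K.
Hypothesis dirpoly_segment_neq0 :
  forall t, 0 <= t <= 1 -> dirpoly a l (segment_point s' s t) <> 0%C.
Hypothesis logderiv_segment_le :
  forall t, 0 <= t <= 1 ->
    Cmod (dirpoly (deriv_coef a) l (segment_point s' s t) / dirpoly a l (segment_point s' s t))%C
    <= K.

Lemma is_derive_C_segment_point (t : R) : is_derive_C (segment_point s' s) t (s - s')%C.
Proof. apply is_derive_C_line. Qed.

Lemma segment_point_0 : segment_point s' s 0 = s'.
Proof. unfold segment_point; ring. Qed.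

Lemma segment_point_1 : segment_point s' s 1 = s.
Proof. unfold segment_point; ring. Qed.

Lemma Cmod_dirpoly_segment_le (t : R) :
  0 <= t <= 1 ->
  Cmod (dirpoly a l (segment_point s' s t)) <= Cmod (dirpoly a l s') * exp (K * Cmod (s - s')%C).
Proof.
  intros Ht. set (F := dirpoly a l). set (F1 := dirpoly (deriv_coef a) l).
  set (p := segment_point s' s). set (d := (s - s')%C).
  assert (Hd := Cmod_ge_0 d).
  assert (Hlog : ln (Cmod (F (p t))) - ln (Cmod (F (p 0))) <= K * Cmod d).
  { destruct (Req_dec t 0) as [->|Ht0]; [rewrite Rminus_eq_0; now apply Rmult_le_pos|].
    destruct (MVT_cor2 (fun u => ln (Cmod (F (p u)))) (fun u => fst (F1 (p u) * d / F (p u))%C) 0 t)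
      as [c [Ec Hc]]; [lra| |].
    - intros u Hu. apply is_derive_Reals, (is_derive_ln_Cmod (fun u => F (p u))).
      + apply dirpoly_segment_neq0; lra.
      + apply is_derive_C_dirpoly, is_derive_C_segment_point.
    - rewrite Ec. eapply Rle_trans.
      { apply Rmult_le_compat_r; [lra|]. eapply Rle_trans; [apply Rle_abs | apply re_le_Cmod]. }
      replace (F1 (p c) * d / F (p c))%C with (F1 (p c) / F (p c) * d)%C
        by (field; apply dirpoly_segment_neq0; lra).
      rewrite Cmod_mult.
      assert (HK : Cmod (F1 (p c) / F (p c))%C <= K) by (apply logderiv_segment_le; lra).
      assert (P : 0 <= Cmod (F1 (p c) / F (p c))%C * Cmod d)
        by (apply Rmult_le_pos; auto using Cmod_ge_0).
      assert (Q : Cmod (F1 (p c) / F (p c))%C * Cmod d <= K * Cmod d)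
        by (apply Rmult_le_compat_r; auto).
      nra. }
  assert (H0 : 0 < Cmod (F (p 0))) by (apply Cmod_gt_0, dirpoly_segment_neq0; lra).
  assert (Ht' : 0 < Cmod (F (p t))) by (apply Cmod_gt_0, dirpoly_segment_neq0; lra).
  fold F. rewrite <- segment_point_0. fold p.
  rewrite <- (exp_ln (Cmod (F (p t)))), <- (exp_ln (Cmod (F (p 0)))) at 1 by auto.
  rewrite <- exp_plus. apply exp_le_compat; lra.
Qed.

Lemma Cmod_deriv_dirpoly_segment_le (t : R) :
  0 <= t <= 1 ->
  Cmod (dirpoly (deriv_coef a) l (segment_point s' s t))
  <= K * (Cmod (dirpoly a l s') * exp (K * Cmod (s - s')%C)).
Proof.
  intros Ht.
  replace (dirpoly (deriv_coef a) l (segment_point s' s t))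
    with (dirpoly (deriv_coef a) l (segment_point s' s t) / dirpoly a l (segment_point s' s t)
          * dirpoly a l (segment_point s' s t))%C by (field; auto).
  rewrite Cmod_mult.
  apply Rmult_le_compat; auto using Cmod_ge_0, Cmod_dirpoly_segment_le.
Qed.

Lemma Cmod_dirpoly_sub_le :
  Cmod (dirpoly a l s - dirpoly a l s')%C
  <= K * Cmod (s - s')%C * exp (K * Cmod (s - s')%C) * Cmod (dirpoly a l s').
Proof.
  set (F := dirpoly a l). set (F1 := dirpoly (deriv_coef a) l).
  set (p := segment_point s' s). set (d := (s - s')%C). set (e := (F s - F s')%C).
  set (B := K * Cmod d * exp (K * Cmod d) * Cmod (F s')).
  (* Mean value theorem for [u |-> Re (conj e * F (p u))], whose increment is [|e|^2]. *)
  destruct (MVT_cor2 (fun u => fst (Cconj e * F (p u))%C)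
              (fun u => fst (Cconj e * (F1 (p u) * d))%C) 0 1) as [c [Ec Hc]]; [lra| |].
  - intros u _. apply is_derive_Reals.
    destruct (is_derive_C_mult (fun _ => Cconj e) (fun u => F (p u)) u _ _ (is_derive_C_const _ u)
                (is_derive_C_dirpoly a l p u d (is_derive_C_segment_point u))) as [A _].
    eapply is_derive_eq; [|exact A]. unfold F1; f_equal; ring.
  - unfold p in Ec. rewrite segment_point_0, segment_point_1, Rminus_0_r, Rmult_1_r in Ec.
    assert (Ee : fst (Cconj e * F s)%C - fst (Cconj e * F s')%C = Cmod e * Cmod e).
    { replace (Cmod e * Cmod e) with (Cmod e ^ 2) by ring. rewrite Cmod2_alt.
      unfold e, Re, Im; destruct (F s), (F s'); simpl; ring. }
    assert (HF1 : Cmod (F1 (p c)) <= K * (Cmod (F s') * exp (K * Cmod d)))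
      by (apply Cmod_deriv_dirpoly_segment_le; lra).
    assert (Hee : Cmod e * Cmod e <= Cmod e * B).
    { rewrite <- Ee, Ec. eapply Rle_trans; [eapply Rle_trans; [apply Rle_abs | apply re_le_Cmod]|].
      rewrite !Cmod_mult, Cmod_conj.
      assert (Cmod (F1 (p c)) * Cmod d <= K * (Cmod (F s') * exp (K * Cmod d)) * Cmod d)
        by (apply Rmult_le_compat_r; auto using Cmod_ge_0).
      unfold B. replace (Cmod e * (K * Cmod d * exp (K * Cmod d) * Cmod (F s')))
        with (Cmod e * (K * (Cmod (F s') * exp (K * Cmod d)) * Cmod d)) by ring.
      apply Rmult_le_compat_l; auto using Cmod_ge_0. }
    destruct (Cmod_ge_0 e) as [He|He].
    + apply (Rmult_le_reg_l (Cmod e)); auto.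
    + rewrite <- He. unfold B.
      repeat apply Rmult_le_pos; auto using Cmod_ge_0, Rlt_le, exp_pos.
Qed.

Lemma Cmod_dirpoly_ratio_sub1_le :
  Cmod (dirpoly a l s / dirpoly a l s' - 1)%C <= K * Cmod (s - s')%C * exp (K * Cmod (s - s')%C).
Proof.
  assert (Hnz : dirpoly a l s' <> 0%C)
    by (rewrite <- segment_point_0; apply dirpoly_segment_neq0; lra).
  assert (Hpos := proj1 (Cmod_gt_0 _) Hnz).
  replace (dirpoly a l s / dirpoly a l s' - 1)%C
    with ((dirpoly a l s - dirpoly a l s') / dirpoly a l s')%C by (field; auto).
  rewrite Cmod_div by auto.
  apply (Rmult_le_reg_r (Cmod (dirpoly a l s'))); auto.
  unfold Rdiv. rewrite Rmult_assoc, Rinv_l, Rmult_1_r by lra.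
  apply Cmod_dirpoly_sub_le.
Qed.

End Segment.

(** * The regions and the bounds provided by [Psi*] *)

Lemma LL_ge_4 (D : nat) : (81 <= D)%nat -> 4 <= LL D.
Proof.
  intros HD. apply le_INR in HD. unfold LL.
  rewrite <- (ln_exp 4). apply ln_le; [apply exp_pos|].
  replace 4 with (1 + 1 + 1 + 1) by ring. rewrite !exp_plus.
  pose proof exp_le_3. pose proof (exp_pos 1).
  assert (E2 : exp 1 * exp 1 <= 9) by nra.
  assert (E4 : exp 1 * exp 1 * (exp 1 * exp 1) <= 81) by nra.
  replace (INR 81) with 81 in HD by (simpl; ring). nra.
Qed.

Lemma ln_ge_1 (x : R) : 4 <= x -> 1 <= ln x.
Proof.
  intros Hx. rewrite <- (ln_exp 1). apply ln_le; [apply exp_pos|].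
  pose proof exp_le_3; lra.
Qed.

Lemma lt_convex (a b x y t : R) :
  a < x < b -> a < y < b -> 0 <= t <= 1 -> a < y + t * (x - y) < b.
Proof.
  intros Hx Hy Ht. destruct (Req_dec t 0) as [->|Ht0]; [lra|].
  assert (0 < t * (x - a)) by (apply Rmult_lt_0_compat; lra).
  assert (0 < t * (b - x)) by (apply Rmult_lt_0_compat; lra).
  assert (0 <= (1 - t) * (y - a)) by (apply Rmult_le_pos; lra).
  assert (0 <= (1 - t) * (b - y)) by (apply Rmult_le_pos; lra).
  split; nra.
Qed.

Lemma Omega2_segment_point (D : nat) (s s' : C) (t : R) :
  Omega2 D s -> Omega2 D s' -> 0 <= t <= 1 -> Omega2 D (segment_point s' s t).
Proof.
  intros [Hs Hsi] [Hs' Hs'i] Ht. apply Rabs_def2 in Hsi, Hs'i.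
  assert (ER : Re (segment_point s' s t - s0 D)%C
               = Re (s' - s0 D)%C + t * (Re (s - s0 D)%C - Re (s' - s0 D)%C))
    by (unfold segment_point, Re; simpl; ring).
  assert (EI : Im (segment_point s' s t - s0 D)%C
               = Im (s' - s0 D)%C + t * (Im (s - s0 D)%C - Im (s' - s0 D)%C))
    by (unfold segment_point, Im; simpl; ring).
  unfold Omega2. rewrite ER, EI. split; [now apply lt_convex|].
  assert (H := lt_convex (- (1 + 10 * LL D)) (1 + 10 * LL D) _ _ t
                 (conj (proj2 Hsi) (proj1 Hsi)) (conj (proj2 Hs'i) (proj1 Hs'i)) Ht).
  apply Rabs_def1; lra.
Qed.

Lemma Rabs_le_between (x a : R) : Rabs x <= a -> - a <= x <= a.
Proof. unfold Rabs; destruct (Rcase_abs x); lra. Qed.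

Lemma abs_im_le_Cmod (x : C) : Rabs (Im x) <= Cmod x.
Proof. pose proof (Rmax_Cmod x); pose proof (Rmax_r (Rabs (fst x)) (Rabs (snd x))); unfold Im; lra. Qed.

Lemma Omega1_near_Omega2 (D : nat) (z w : C) :
  4 <= LL D -> Omega2 D z -> Cmod (w - z)%C < 3 / (2 * LL D) -> Omega1 D w.
Proof.
  intros HL [[A1 A2] A3] Hw. set (L := LL D) in *. set (u := / L).
  assert (Hu : L * u = 1) by (unfold u; field; lra).
  assert (Hu0 : 0 < u <= / 4) by (split; [unfold u; apply Rinv_0_lt_compat; lra
                                         | apply Rinv_le_contravar; lra]).
  assert (Hsq : sqrt (alpha D) = u) by (unfold alpha, u; fold L; rewrite sqrt_inv, sqrt_pow2; lra).
  assert (Hln : ln L <= L) by (pose proof (exp_ineq1_le (ln L)); rewrite exp_ln in H; lra).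
  assert (Hlo : - (1 / 10) * alpha D * ln L >= - (1 / 10) * u).
  { unfold alpha; fold L. replace (/ L ^ 2) with (u * u) by (unfold u; field; lra).
    assert (0 < ln L) by (pose proof (ln_ge_1 L HL); lra). nra. }
  replace (3 / (2 * L)) with (3 / 2 * u) in Hw by (unfold u; field; lra).
  assert (Hre := re_le_Cmod (w - z)%C). assert (Him := abs_im_le_Cmod (w - z)%C).
  assert (ER : Re (w - s0 D)%C = Re (w - z)%C + Re (z - s0 D)%C) by (unfold Re; simpl; ring).
  assert (EI : Im (w - s0 D)%C = Im (w - z)%C + Im (z - s0 D)%C) by (unfold Im; simpl; ring).
  apply Rabs_def2 in A3. unfold Omega1. rewrite Hsq, ER, EI. fold L.
  apply Rabs_le_between in Hre, Him.
  split; [split|apply Rabs_def1]; lra.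
Qed.

Lemma Cmod_bounds_of_mul_near_1 (f g : C) (B : R) :
  Cmod f + Cmod g <= B -> Cmod (f * g - 1)%C <= 1 / 2 -> / (2 * B) <= Cmod f <= B.
Proof.
  intros HB H1.
  pose proof (Cmod_ge_0 f). pose proof (Cmod_ge_0 g).
  assert (Hfg : 1 / 2 <= Cmod f * Cmod g).
  { rewrite <- Cmod_mult.
    assert (T := Cmod_triangle (f * g)%C (- (f * g - 1))%C).
    replace (f * g + - (f * g - 1))%C with (RtoC 1) in T by ring.
    rewrite Cmod_opp, Cmod_1 in T. lra. }
  assert (HB0 : 0 < B) by nra.
  split; [|lra].
  apply (Rmult_le_reg_l (2 * B)); [lra|]. rewrite Rinv_r by lra.
  assert (Cmod f * Cmod g <= Cmod f * B) by (apply Rmult_le_compat_l; lra). lra.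
Qed.

Lemma FF_dirpoly (D : nat) (chi psi : nat -> C) :
  FF D chi psi = dirpoly (fun n => nu chi n * psi n)%C (seq 1 (D ^ 5)).
Proof. reflexivity. Qed.

Lemma Psi_star_FF_bounds (D : nat) (chi psi : nat -> C) (w : C) :
  in_Psi_star D chi psi -> Omega1 D w ->
  / (2 * (LL D ^ 3 * ln (LL D))) <= Cmod (FF D chi psi w) <= LL D ^ 3 * ln (LL D).
Proof.
  intros (_ & [M1 [HM1 B1]] & [M2 [HM2 B2]] & _) Hw.
  apply (Cmod_bounds_of_mul_near_1 _ (GG D chi psi w)).
  - specialize (B1 w Hw); simpl in B1; lra.
  - specialize (B2 w Hw); simpl in B2; lra.
Qed.

Lemma Omega1_of_Omega2 (D : nat) (w : C) : 4 <= LL D -> Omega2 D w -> Omega1 D w.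
Proof.
  intros HL Hw. apply (Omega1_near_Omega2 D w); auto.
  replace (w - w)%C with (RtoC 0) by ring. rewrite Cmod_0.
  apply Rdiv_lt_0_compat; lra.
Qed.

Lemma Psi_star_FF_neq0 (D : nat) (chi psi : nat -> C) (w : C) :
  (81 <= D)%nat -> in_Psi_star D chi psi -> Omega2 D w -> FF D chi psi w <> 0%C.
Proof.
  intros HD HP Hw E. pose proof (LL_ge_4 D HD) as HL. pose proof (ln_ge_1 _ HL).
  destruct (Psi_star_FF_bounds D chi psi w HP (Omega1_of_Omega2 D w HL Hw)) as [Hm _].
  rewrite E, Cmod_0 in Hm.
  assert (0 < / (2 * (LL D ^ 3 * ln (LL D)))); [|lra].
  apply Rinv_0_lt_compat. pose proof (pow_lt (LL D) 3 ltac:(lra)). nra.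
Qed.

(* On the disc of radius [3 / (2 L)] about [w] the polynomial [F] stays between
   [1 / (2 M)] and [M = L^3 log L], and [log (2 M^2) <= 9 log L]. *)
Lemma Psi_star_logderiv_le (D : nat) (chi psi : nat -> C) (w : C) :
  (81 <= D)%nat -> in_Psi_star D chi psi -> Omega2 D w ->
  Cmod (dirpoly (deriv_coef (fun n => nu chi n * psi n)%C) (seq 1 (D ^ 5)) w
        / FF D chi psi w)%C
  <= 18 * LL D * ln (LL D).
Proof.
  intros HD HP Hw. pose proof (LL_ge_4 D HD) as HL.
  set (L := LL D) in *. set (lam := ln L).
  assert (Hlam : 1 <= lam) by (apply ln_ge_1, HL).
  assert (Hlnlam : ln lam <= lam)
    by (pose proof (exp_ineq1_le (ln lam)); rewrite exp_ln in H; lra).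
  set (M := L ^ 3 * lam). assert (HM : 0 < M) by (pose proof (pow_lt L 3 ltac:(lra)); unfold M; nra).
  assert (Hgap : ln M - ln (/ (2 * M)) <= 9 * lam).
  { assert (HL3 := pow_lt L 3 ltac:(lra)).
    unfold M in *. rewrite ln_Rinv, !ln_mult, ln_pow by (repeat apply Rmult_lt_0_compat; lra).
    assert (ln 2 < 1) by (rewrite <- (ln_exp 1); apply ln_increasing; [lra|];
                          pose proof (exp_ineq1 1 ltac:(lra)); lra).
    fold lam. simpl INR. lra. }
  eapply Rle_trans.
  - rewrite FF_dirpoly. apply (Cmod_dirpoly_logderiv_le _ _ w (3 / (2 * L)) (/ L) (/ (2 * M)) M).
    + split; [apply Rinv_0_lt_compat; lra|].
      apply (Rmult_lt_reg_l (2 * L)); [lra|]. field_simplify; lra.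
    + apply Rinv_0_lt_compat; lra.
    + intros w' Hw'. rewrite <- FF_dirpoly.
      apply Psi_star_FF_bounds; auto. now apply (Omega1_near_Omega2 D w).
  - replace (2 * (ln M - ln (/ (2 * M))) / / L) with (2 * L * (ln M - ln (/ (2 * M))))
      by (field; lra).
    nra.
Qed.

Theorem corollary2p9 :
  exists (C0 : R) (D0 : nat), 0 < C0 /\
  forall (D : nat) (chi psi : nat -> C) (s s' : C),
    (D0 <= D)%nat ->
    primitive_char D chi -> real_char chi ->
    in_Psi_star D chi psi ->
    Omega2 D s -> Omega2 D s' ->
    Cmod (Cminus s s') <= / (LL D * ln (LL D)) ->
    Cmod (Cminus (Cdiv (FF D chi psi s) (FF D chi psi s')) (RtoC 1))
      <= C0 * (Cmod (Cminus s s') * LL D * ln (LL D)).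
Proof.
  exists (18 * exp 18), 81%nat. split; [pose proof (exp_pos 18); lra|].
  intros D chi psi s s' HD _ _ HP Hs Hs' Hd.
  pose proof (LL_ge_4 D HD) as HL. pose proof (ln_ge_1 _ HL) as Hlam.
  set (K := 18 * LL D * ln (LL D)).
  assert (HK : K * Cmod (s - s')%C <= 18).
  { apply (Rmult_le_compat_l K) in Hd; [|unfold K; nra].
    replace (K * / (LL D * ln (LL D))) with 18 in Hd by (unfold K; field; split; lra).
    exact Hd. }
  rewrite FF_dirpoly.
  eapply Rle_trans.
  - apply (Cmod_dirpoly_ratio_sub1_le _ _ s s' K); [unfold K; nra| |]; intros t Ht;
      [rewrite <- FF_dirpoly; apply Psi_star_FF_neq0
      |apply Psi_star_logderiv_le]; auto using Omega2_segment_point.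
  - pose proof (Cmod_ge_0 (s - s')%C). pose proof (exp_le_compat _ _ HK).
    replace (18 * exp 18 * (Cmod (s - s')%C * LL D * ln (LL D))) with (K * Cmod (s - s')%C * exp 18)
      by (unfold K; ring).
    apply Rmult_le_compat_l; auto. apply Rmult_le_pos; auto. unfold K; nra.
Qed.
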